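(* Let $d\ge2$ be an integer and consider the cone percolation process with radius of influence $R$ on the homogeneous tree $\mathbb{T}_d$, with law $\mathbb{P}$ and survival event $V$. Let $\rho$ be the smallest non-negative root of $\mathbb{E}(\rho^{d^R})+(1-\rho)p_0=\rho$ and $\psi$ the smallest non-negative root of $\mathbb{E}\big(\psi^{\sum_{m=1}^{R}d^m}\big)=\psi$ (an empty sum being $0$). Then $$1-\big(1-\rho^{\frac{d+1}{d}}\big)p_0-\mathbb{E}\Big(\rho^{\frac{d+1}{d}d^R}\Big)\ \le\ \mathbb{P}(V)\ \le\ 1-\mathbb{E}\Big(\psi^{\frac{d+1}{d-1}(d^R-1)}\Big).$$
   Context: Cone percolation process: Let $\mathbb{T}$ be a tree with origin $\mathcal{O}$ and graph distance $d(\cdot,\cdot)$. Write $u\le v$ if $u$ lies on the path from $\mathcal{O}$ to $v$. Let $R$ be a random variable with values in $\{0,1,2,\dots\}$, $p_k=\mathbb{P}(R=k)$, and assume $p_0\in(0,1)$. Let $\{R_v\}$ be i.i.d. copies of $R$ indexed by the vertices. For each vertex $u$ let $B_u=\{v: u\le v,\ d(u,v)\le R_u\}$. Set $I_0=\{\mathcal{O}\}$, $I_{n+1}=\bigcup_{u\in I_n}B_u$, $I=\bigcup_n I_n$; survival is the event $V=\{|I|=\infty\}$. $\mathbb{T}_d$ is the tree in which every vertex has degree $d+1$, with origin $\mathcal{O}$. *)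

From HB Require Import structures.
From mathcomp Require Import all_boot all_order all_algebra.
From mathcomp Require Import all_classical all_reals all_analysis.
Set Implicit Arguments. Unset Strict Implicit. Unset Printing Implicit Defensive.
Import Order.TTheory GRing.Theory Num.Theory.
Local Open Scope classical_set_scope.
Local Open Scope ring_scope.

(* Vertices of the homogeneous tree T_d (every vertex of degree d+1), rooted at
   the origin O = [::].  A vertex is the sequence of child indices along the
   path from O: the first step chooses one of the d+1 neighbours of O, every
   later step one of the d children (the remaining neighbour is the parent). *)
Definition valid_vtx (d : nat) (v : seq nat) : bool :=
  match v with
  | [::] => true
  | a :: s => (a < d.+1)%N && all (fun i => (i < d)%N) s
  end.

Definition vtx (d : nat) := {v : seq nat | valid_vtx d v}.

Definition origin (d : nat) : vtx d := exist _ [::] erefl.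

(* u <= v : u lies on the path from O to v;  then d(u,v) = |v| - |u|. *)
Definition tree_le (d : nat) (u v : vtx d) : bool := prefix (val u) (val v).
Definition tree_dist_down (d : nat) (u v : vtx d) : nat := (size (val v) - size (val u))%N.

Definition cone (d : nat) (r : vtx d -> nat) (u : vtx d) : set (vtx d) :=
  [set v | tree_le u v /\ (tree_dist_down u v <= r u)%N].

Fixpoint Ilevel (d : nat) (r : vtx d -> nat) (n : nat) : set (vtx d) :=
  match n with
  | 0 => [set origin d]
  | n'.+1 => \bigcup_(u in Ilevel r n') cone r u
  end.

Definition cluster (d : nat) (r : vtx d -> nat) : set (vtx d) :=
  \bigcup_(n in [set: nat]) Ilevel r n.

Definition survival (d : nat) (T : Type) (Rv : vtx d -> T -> nat) : set T :=
  [set w | ~ finite_set (cluster (fun v => Rv v w))].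

(* E(f(R)) for R with law p, as an extended-real series of nonnegative terms *)
Definition Eg (R : realType) (p : nat -> R) (f : nat -> R) : \bar R :=
  (\sum_(0 <= k <oo) ((p k * f k)%:E))%E.

From Pilot Require Import Defs.
From HB Require Import structures.
From mathcomp Require Import all_boot all_order all_algebra.
From mathcomp Require Import all_classical all_reals all_analysis.
From mathcomp Require Import zify ring lra.
Import Order.TTheory GRing.Theory Num.Theory numFieldNormedType.Exports.
Set Implicit Arguments. Unset Strict Implicit. Unset Printing Implicit Defensive.
Local Open Scope classical_set_scope.
Local Open Scope ring_scope.

(* The cluster is finite iff the process dies out within finitely many
   generations below the origin.  Let f(w, a) ([ext w a]) be the probability
   that the process below a vertex w dies out when w is reached by a cone that
   still covers a further generations below w.  Independence of the radii in
   disjoint subtrees gives the recursion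
     f(w, a) = E[ prod_{children c of w} f(c, max(a, R_w) - 1) ],
   the product being 1 when max(a, R_w) = 0.  Away from the origin every
   vertex has d children, and induction on the depth gives
   f(w, a) <= rho^(d^a), because rho is a fixed point of
   t |-> E[t^(d^R); R > 0] + p_0; one more step at the origin, which has d+1
   children, gives the lower bound on P(V).  Conversely,
   f(w, a+1) >= f(w, 0) prod_c f(c, a) and f(w, 0) >= E[t^(d + ... + d^R)]
   whenever f(c, b) >= t^(1 + d + ... + d^b) for the children, so iterating
   t |-> E[t^(d + ... + d^R)] from 0 yields a root t* >= psi with
   f(w, a) >= t*^(1 + d + ... + d^a), which gives the upper bound. *)

Section Tree.
Variable d : nat.

Definition depends_on (s : seq (vtx d)) (Q : (vtx d -> nat) -> Prop) :=
  forall r r', {in s, r =1 r'} -> Q r -> Q r'.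

Lemma depends_on_undup s Q : depends_on s Q -> depends_on (undup s) Q.
Proof. by move=> H r r' E; apply: H => u us; apply: E; rewrite mem_undup. Qed.

Definition nchildren (w : vtx d) : nat := if val w is [::] then d.+1 else d.

Definition child (w : vtx d) (i : nat) : vtx d := insubd (origin d) (rcons (val w) i).

Definition subtree (w : vtx d) : pred (vtx d) := fun v => prefix (val w) (val v).

Lemma val_child (w : vtx d) i : (i < nchildren w)%N -> val (child w i) = rcons (val w) i.
Proof.
move=> Hi; rewrite /child val_insubd ifT //.
case: w Hi => [[|a s] /= Hv]; rewrite /nchildren /= => Hi; first by rewrite Hi.
by move: Hv => /andP[-> Hs]; rewrite all_rcons Hi.
Qed.

Lemma size_child (w : vtx d) i :
  (i < nchildren w)%N -> size (val (child w i)) = (size (val w)).+1.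
Proof. by move=> Hi; rewrite val_child // size_rcons. Qed.

Lemma prefix_child (w : vtx d) i : (i < nchildren w)%N -> prefix (val w) (val (child w i)).
Proof. by move=> Hi; rewrite val_child // prefix_rcons. Qed.

Lemma nchildren_child (w : vtx d) i : (i < nchildren w)%N -> nchildren (child w i) = d.
Proof. by move=> Hi; rewrite /nchildren val_child //; case: (val w). Qed.

Lemma child_prefix_inj (w v : vtx d) i j : (i < nchildren w)%N -> (j < nchildren w)%N ->
  prefix (val (child w i)) (val v) -> prefix (val (child w j)) (val v) -> i = j.
Proof.
move=> Hi Hj; rewrite !val_child // !prefixE !size_rcons => /eqP Ei /eqP Ej.
by move: Ei; rewrite Ej => /eqP; rewrite eqseq_rcons => /andP[_ /eqP].
Qed.

Lemma child_not_prefix (w : vtx d) i :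
  (i < nchildren w)%N -> ~~ prefix (val (child w i)) (val w).
Proof. by move=> Hi; apply/negP => /size_prefix; rewrite size_child // ltnn. Qed.

(* Stated on vertices so that [lia] sees one form of [size (val _)]. *)
Lemma size_val_prefix (u v : vtx d) :
  prefix (val u) (val v) -> (size (val u) <= size (val v))%N.
Proof. exact: size_prefix. Qed.

Lemma vtx_prefix_eq (u v : vtx d) :
  prefix (val u) (val v) -> size (val v) = size (val u) -> u = v.
Proof.
move=> /prefixP [t Ht] Hs; apply: val_inj; move: Hs; rewrite Ht size_cat.
by case: t Ht => [|x t] Ht; [rewrite cats0 | rewrite /=; lia].
Qed.

Lemma prefix_child_exists (u v : vtx d) : prefix (val u) (val v) ->
  (size (val u) < size (val v))%N ->
  exists2 i, (i < nchildren u)%N & prefix (val (child u i)) (val v).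
Proof.
move=> /prefixP [t Ht]; rewrite Ht size_cat -{1}(addn0 (size (val u))) ltn_add2l.
case: t Ht => [//|i t] Ht _.
have Hi : (i < nchildren u)%N.
  have := valP v; rewrite Ht /nchildren; case: (val u) => [|x s] /=.
    by case/andP.
  by case/andP => _; rewrite all_cat => /andP[_ /andP[]].
exists i => //; rewrite val_child // -cats1 prefix_catr //.
by rewrite eqxx andTb; apply/prefixP; exists t.
Qed.

(* [extinct_by n r w a]: in the configuration of radii [r], if [w] is reached
   by a cone that still covers [a] further generations below [w], then the
   part of the process below [w] dies out within [n] generations.  The vertex
   [w] extends the cone to depth [maxn a (r w)]. *)
Fixpoint extinct_by (n : nat) (r : vtx d -> nat) (w : vtx d) (a : nat) : Prop :=
  if n is n'.+1 then
    maxn a (r w) = 0%N \/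
    forall i, (i < nchildren w)%N -> extinct_by n' r (child w i) (maxn a (r w)).-1
  else False.

Lemma extinct_byS n r w a : extinct_by n r w a -> extinct_by n.+1 r w a.
Proof.
elim: n w a => [//|n IH] w a /= [H|H]; [by left | right].
by move=> i Hi; apply/IH/H.
Qed.

Lemma extinct_by_le m n r w a : (m <= n)%N -> extinct_by m r w a -> extinct_by n r w a.
Proof.
move=> /subnK <-; elim: (n - m)%N => [//|k IH] H.
by rewrite addSn; apply/extinct_byS/IH.
Qed.

Lemma extinct_by_le_radius n r w a b :
  (b <= a)%N -> extinct_by n r w a -> extinct_by n r w b.
Proof.
elim: n w a b => [//|n IH] w a b ba /= [H|H]; first by left; lia.
have [E|E] := eqVneq (maxn b (r w)) 0%N; first by left.
by right=> i Hi; apply: (IH _ (maxn a (r w)).-1); [lia | exact: H].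
Qed.

Lemma extinct_by_radius_lt n r w a : (0 < d)%N -> extinct_by n r w a -> (a < n)%N.
Proof.
move=> d0; elim: n w a => [//|n IH] w a /= [H|H]; first by lia.
have Hi : (0 < nchildren w)%N by rewrite /nchildren; case: (val w).
by have := IH _ _ (H 0%N Hi); lia.
Qed.

Fixpoint support (n : nat) (w : vtx d) : seq (vtx d) :=
  if n is n'.+1 then
    w :: flatten [seq support n' (child w i) | i <- iota 0 (nchildren w)]
  else [::].

Lemma support_subtree n w : {subset support n w <= subtree w}.
Proof.
elim: n w => [//|n IH] w u; rewrite inE => /orP[/eqP -> | /flatten_mapP [i]].
  exact: prefix_refl.
rewrite mem_iota add0n => /andP[_ Hi] /IH; rewrite /subtree.
exact/prefix_trans/prefix_child.
Qed.

Lemma extinct_by_depends_on n w a :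
  depends_on (support n w) (fun r => extinct_by n r w a).
Proof.
elim: n w a => [|n IH] w a r r' E //=.
have -> : r w = r' w by apply: E; exact: mem_head.
case=> [H|H]; [by left | right] => i Hi.
apply: (IH _ _ r) (H i Hi) => u us; apply: E.
by rewrite /= inE; apply/orP; right; apply/flatten_mapP; exists i; rewrite ?mem_iota.
Qed.

End Tree.

Section Cluster.
Variables (d : nat) (r : vtx d -> nat).
Hypothesis d_gt0 : (0 < d)%N.
Local Notation cluster := Defs.cluster.

Lemma cluster_origin : cluster r (origin d).
Proof. by exists 0%N. Qed.

Lemma cluster_cone u v : cluster r u -> cone r u v -> cluster r v.
Proof. by move=> [n _ Hn] Hc; exists n.+1 => //; exists u. Qed.

Lemma cluster_ind (Q : vtx d -> Prop) : Q (origin d) ->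
  (forall u v, Q u -> cone r u v -> Q v) -> forall v, cluster r v -> Q v.
Proof.
move=> H0 HS v [n _]; elim: n v => [|n IH] v /=; first by move=> ->.
by move=> [u /IH Hu Hc]; apply: HS Hc.
Qed.

Lemma extinct_by_of_cluster_bounded D :
  (forall v, cluster r v -> (size (val v) < D)%N) ->
  forall n w a, (D <= size (val w) + n)%N -> cluster r w ->
  (forall v, prefix (val w) (val v) -> (size (val v) - size (val w) <= a)%N ->
    cluster r v) ->
  extinct_by n r w a.
Proof.
move=> HD; elim=> [|n IH] w a Hs Hw Hb; first by have := HD _ Hw; lia.
have [E|E] := eqVneq (maxn a (r w)) 0%N; first by left.
right=> i Hi.
have Hball v : prefix (val w) (val v) ->
    (size (val v) - size (val w) <= maxn a (r w))%N -> cluster r v.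
  move=> Hp; rewrite leq_max => /orP[H|H]; first exact: Hb.
  by apply: cluster_cone Hw _; split.
apply: IH; first by rewrite size_child //; lia.
  by apply: Hball; rewrite ?prefix_child ?size_child //; lia.
move=> v Hp; rewrite size_child // => Hle; apply: Hball; last by lia.
exact: prefix_trans (prefix_child Hi) Hp.
Qed.

Lemma extinct_by_descend j (w u : vtx d) a m :
  (size (val u) - size (val w))%N = j -> prefix (val w) (val u) -> (j <= a)%N ->
  extinct_by m r w a -> extinct_by (m - j) r u (a - j).
Proof.
elim: j w a m => [|j IH] w a m Hj Hp Hja HG.
  have Hs : size (val u) = size (val w) by have := size_val_prefix Hp; lia.
  by rewrite -(vtx_prefix_eq Hp Hs) !subn0.
have [i Hi Hc] := prefix_child_exists Hp (ltac:(lia)).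
have am := extinct_by_radius_lt d_gt0 HG.
case: m HG am => [//|m] /= [H|H] am; first by lia.
have HGi := extinct_by_le_radius (ltac:(lia) : (a.-1 <= (maxn a (r w)).-1)%N) (H i Hi).
have Hj' : (size (val u) - size (val (child w i)))%N = j by rewrite size_child //; lia.
have := IH _ _ _ Hj' Hc (ltac:(lia) : (j <= a.-1)%N) HGi.
by rewrite subSS (_ : (a - j.+1 = a.-1 - j)%N) //; lia.
Qed.

Lemma cluster_bounded_of_extinct_by n : extinct_by n r (origin d) 0 ->
  forall v, cluster r v -> (size (val v) < n)%N.
Proof.
move=> H0.
(* Each cluster vertex lies in a cone from some [w] below which the process
   still dies out within the depth left to it. *)
pose Inv (v : vtx d) := exists (w : vtx d) a m, [/\ prefix (val w) (val v),
  (size (val v) - size (val w) <= a)%N, extinct_by m r w a & (size (val w) + m <= n)%N].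
suff HI v : cluster r v -> Inv v.
  move=> v /HI [w [a [m [Hp Hs HG Hn]]]].
  by have := extinct_by_radius_lt d_gt0 HG; have := size_val_prefix Hp; lia.
apply: cluster_ind v; first by exists (origin d), 0%N, n; split => //; exact: prefix_refl.
move=> u v [w [a [m [Hp Hs HG Hn]]]] [Hc]; rewrite /tree_dist_down => Hcd.
have Hsw := size_val_prefix Hp; have Hsuv := size_val_prefix Hc.
have HGu := extinct_by_descend (erefl _) Hp Hs HG.
have am := extinct_by_radius_lt d_gt0 HG.
set j := (size (val u) - size (val w))%N in HGu.
have [Heq|Hlt] := eqVneq (size (val v)) (size (val u)).
  rewrite -(vtx_prefix_eq Hc Heq).
  by exists u, (a - j)%N, (m - j)%N; split; rewrite ?subnn ?prefix_refl //; lia.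
have bm := extinct_by_radius_lt d_gt0 HGu.
have [i Hi Hci] := prefix_child_exists Hc (ltac:(lia)).
move: HGu bm; case E: (m - j)%N => [|m2] // [H|H] bm; first by lia.
exists (child u i), (maxn (a - j) (r u)).-1, m2.
by split; rewrite ?size_child //; [lia | exact: H | lia].
Qed.

Fixpoint seqs_lt (n : nat) : seq (seq nat) :=
  if n is n'.+1 then [::] :: [seq x :: s | x <- iota 0 d.+1, s <- seqs_lt n'] else [::].

Lemma mem_seqs_lt n (s : seq nat) :
  (size s < n)%N -> all (fun x => x < d.+1)%N s -> s \in seqs_lt n.
Proof.
elim: n s => [//|n IH] [|x s] Hs; first by rewrite in_cons eqxx.
move=> /andP[Hx Ha]; rewrite in_cons; apply/orP; right.
by apply/allpairsP; exists (x, s); rewrite mem_iota IH.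
Qed.

Lemma finite_vtx_size_lt D : finite_set [set v : vtx d | (size (val v) < D)%N].
Proof.
apply: (sub_finite_set _ (finite_seq (map (insubd (origin d)) (seqs_lt D)))).
move=> v /= Hv; apply/mapP; exists (val v); last by rewrite valKd.
apply: mem_seqs_lt => //.
have := valP v; case: (val v) => [//|x s] /= /andP[-> Hs] /=.
by apply: sub_all Hs => y /= Hy; apply: ltnW.
Qed.

Lemma finite_clusterP : finite_set (cluster r) <-> exists n, extinct_by n r (origin d) 0.
Proof.
split.
  move/finite_seqP => [s Hs]; set D := (\max_(v <- s) size (val v)).+1.
  exists D; apply: (extinct_by_of_cluster_bounded (D := D)) => //.
  - move=> v; rewrite Hs /= => vs; rewrite ltnS.
    exact: (@leq_bigmax_seq _ s xpredT (fun u => size (val u)) v vs).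
  - exact: cluster_origin.
  - move=> v _; rewrite subn0 leqn0 => /eqP /size0nil v0.
    by rewrite (_ : v = origin d); [exact: cluster_origin | apply: val_inj].
move=> [n Hn]; apply: sub_finite_set (finite_vtx_size_lt n).
by move=> v /(cluster_bounded_of_extinct_by Hn).
Qed.

End Cluster.

Section RealFacts.
Variable R : realType.

Lemma prod_iota_const m (c : R) : \prod_(i <- iota 0 m) c = c ^+ m.
Proof. by rewrite -[m]subn0 -/(index_iota 0 m) prodr_const_nat. Qed.

Lemma prod_iota_le_const m (F : nat -> R) c :
  (forall i, (i < m)%N -> 0 <= F i <= c) -> \prod_(i <- iota 0 m) F i <= c ^+ m.
Proof.
move=> H; rewrite -prod_iota_const big_seq_cond [X in _ <= X]big_seq_cond.
by apply: ler_prod => i /andP[]; rewrite mem_iota add0n => /andP[_ /H].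
Qed.

Lemma prod_iota_ge_const m (F : nat -> R) c : 0 <= c ->
  (forall i, (i < m)%N -> c <= F i) -> c ^+ m <= \prod_(i <- iota 0 m) F i.
Proof.
move=> c0 H; rewrite -prod_iota_const big_seq_cond [X in _ <= X]big_seq_cond.
by apply: ler_prod => i /andP[]; rewrite mem_iota add0n c0 => /andP[_ /H].
Qed.

Lemma powR_le1 (x y : R) : 0 <= x <= 1 -> 0 <= y -> x `^ y <= 1.
Proof.
move=> /andP[x0 x1] y0; have := @ge0_ler_powR R y y0 x 1.
by rewrite powR1; apply; rewrite ?nnegrE.
Qed.

Lemma cvg_big_seq (I : Type) (op : R -> R -> R) (idx : R) (s : seq I)
    (u : I -> nat -> R) (l : I -> R) :
  (forall x y : R ^nat, forall a b, x n @[n --> \oo] --> a -> y n @[n --> \oo] --> b ->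
    op (x n) (y n) @[n --> \oo] --> op a b) ->
  (forall i, u i n @[n --> \oo] --> l i) ->
  \big[op/idx]_(i <- s) u i n @[n --> \oo] --> \big[op/idx]_(i <- s) l i.
Proof.
move=> cvg_op H; elim: s => [|i s IH].
  by rewrite big_nil; under eq_cvg do rewrite big_nil; exact: cvg_cst.
by rewrite big_cons; under eq_cvg do rewrite big_cons; exact: cvg_op.
Qed.

Lemma cvg_sum_seq (I : Type) (s : seq I) (u : I -> nat -> R) (l : I -> R) :
  (forall i, u i n @[n --> \oo] --> l i) ->
  \sum_(i <- s) u i n @[n --> \oo] --> \sum_(i <- s) l i.
Proof. by apply: cvg_big_seq => x y a b; exact: cvgD. Qed.

Lemma cvg_prod_seq (I : Type) (s : seq I) (u : I -> nat -> R) (l : I -> R) :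
  (forall i, u i n @[n --> \oo] --> l i) ->
  \prod_(i <- s) u i n @[n --> \oo] --> \prod_(i <- s) l i.
Proof. by apply: cvg_big_seq => x y a b; exact: cvgM. Qed.

Lemma cvg_expr (u : R ^nat) (l : R) m :
  u n @[n --> \oo] --> l -> u n ^+ m @[n --> \oo] --> l ^+ m.
Proof.
move=> H; rewrite -prod_iota_const; under eq_cvg do rewrite -prod_iota_const.
exact: (@cvg_prod_seq _ _ (fun i n => u n)).
Qed.

End RealFacts.

Section ConePercolation.
Context (R : realType) (dsp : measure_display) (T : measurableType dsp)
  (P : probability T R) (d : nat) (p : nat -> R) (Rv : vtx d -> T -> nat).
Hypothesis Rv_measurable : forall v k, measurable [set w | Rv v w = k].
Hypothesis P_Rv : forall v k, P [set w | Rv v w = k] = (p k)%:E.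
Hypothesis P_Rv_bigcap : forall (s : seq (vtx d)), uniq s -> forall k : vtx d -> nat,
  P (\bigcap_(v in [set` s]) [set w | Rv v w = k v]) = (\prod_(v <- s) p (k v))%:E.
Hypothesis d_gt0 : (0 < d)%N.

Definition cevent (Q : (vtx d -> nat) -> Prop) : set T := [set w | Q (Rv^~ w)].

Definition override (k : vtx d -> nat) (s : seq (vtx d)) (r : vtx d -> nat) :=
  fun u => if u \in s then r u else k u.

Definition fupd (k : vtx d -> nat) (v : vtx d) (j : nat) :=
  fun u => if u == v then j else k u.

Definition cylinder (t : seq (vtx d)) (k : vtx d -> nat) : set T :=
  \bigcap_(v in [set` t]) [set w | Rv v w = k v].

Definition prob (A : set T) : R := fine (P A).

Lemma probE A : measurable A -> P A = (prob A)%:E.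
Proof. by move=> mA; rewrite fineK // fin_num_measure. Qed.

Lemma prob_ge0 A : 0 <= prob A.
Proof. by rewrite fine_ge0 // measure_ge0. Qed.

Lemma prob_le1 A : measurable A -> prob A <= 1.
Proof. by move=> mA; rewrite -lee_fin -probE //; exact: probability_le1. Qed.

Lemma le_prob A B : measurable A -> measurable B -> A `<=` B -> prob A <= prob B.
Proof.
by move=> mA mB AB; rewrite -lee_fin -!probE //; apply: le_measure; rewrite ?inE.
Qed.

Lemma p_ge0 k : 0 <= p k.
Proof. by rewrite -lee_fin -(P_Rv (origin d)) measure_ge0. Qed.

Lemma nneseries_p_eq1 : (\sum_(0 <= k <oo) (p k)%:E)%E = 1%E.
Proof.
rewrite -(probability_setT P).
have -> : setT = \bigcup_k [set w | Rv (origin d) w = k].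
  by apply/seteqP; split=> w // _; exists (Rv (origin d) w).
under eq_eseriesr do rewrite -(P_Rv (origin d)).
apply/cvg_lim => //; apply: measure_sigma_additive => //.
by move=> i j _ _ [w [/= <- <-]].
Qed.

Lemma cylinder_nil k : cylinder [::] k = setT.
Proof. by apply/seteqP; split=> w //= _ v. Qed.

Lemma cylinder_cons v t k :
  cylinder (v :: t) k = [set w | Rv v w = k v] `&` cylinder t k.
Proof.
apply/seteqP; split=> w /=.
  move=> H; split; first by apply: H; rewrite /= inE eqxx.
  by move=> u ut; apply: H; rewrite /= inE ut orbT.
by move=> [H1 H2] u; rewrite /= inE => /orP[/eqP->//|ut]; apply: H2.
Qed.

Lemma measurable_cylinder t k : measurable (cylinder t k).
Proof.
elim: t => [|v t IH]; first by rewrite cylinder_nil.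
by rewrite cylinder_cons; apply: measurableI.
Qed.

Lemma measure_cylinder t k : uniq t -> P (cylinder t k) = (\prod_(v <- t) p (k v))%:E.
Proof. by move=> ut; exact: P_Rv_bigcap. Qed.

Lemma cylinder_fupd t k v j : v \notin t -> cylinder t (fupd k v j) = cylinder t k.
Proof.
elim: t => [|u t IH]; first by rewrite !cylinder_nil.
rewrite inE negb_or => /andP[vu vt]; rewrite !cylinder_cons IH //.
by rewrite /fupd eq_sym (negbTE vu).
Qed.

Lemma setI_cylinder_fupd t k v j : v \notin t ->
  [set w | Rv v w = j] `&` cylinder t k = cylinder (v :: t) (fupd k v j).
Proof. by move=> vt; rewrite cylinder_cons cylinder_fupd // /fupd eqxx. Qed.

Lemma prod_fupd t k v j : v \notin t ->
  \prod_(u <- t) p (fupd k v j u) = \prod_(u <- t) p (k u).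
Proof.
move=> vt; apply: eq_big_seq => u ut; rewrite /fupd.
by case: eqVneq ut => // -> ut; rewrite ut in vt.
Qed.

Lemma override_nil k r : override k [::] r = k.
Proof. by apply/funext. Qed.

Lemma override_cons k v s r : override k (v :: s) r = override (fupd k v (r v)) s r.
Proof.
apply/funext => u; rewrite /override /fupd inE.
by case: (eqVneq u v) => [->|uv] /=; case: (_ \in s).
Qed.

Lemma cevent_override_nil Q k :
  cevent (Q \o override k [::]) = if asbool (Q k) then setT else set0.
Proof.
by apply/seteqP; split=> w; rewrite /cevent /= override_nil; case: asboolP.
Qed.

Lemma cevent_override_cons Q k v s X :
  cevent (Q \o override k (v :: s)) `&` X =
  \bigcup_j (cevent (Q \o override (fupd k v j) s) `&` ([set w | Rv v w = j] `&` X)).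
Proof.
apply/seteqP; split=> w /=; have := override_cons k v s (Rv^~ w); rewrite /cevent /=.
  by move=> E [H Xw]; exists (Rv v w) => //; split=> //=; rewrite -E.
by move=> E [j _ [/= H [rj Xw]]]; rewrite E; subst j.
Qed.

Lemma measurable_cevent_override Q s k : measurable (cevent (Q \o override k s)).
Proof.
elim: s k => [|v s IH] k; first by rewrite cevent_override_nil; case: asboolP.
rewrite -[cevent _]setIT cevent_override_cons; apply: bigcupT_measurable => j.
by apply: measurableI => //; apply: measurableI.
Qed.

Lemma measure_cevent_override_cons Q k v s X : measurable X ->
  P (cevent (Q \o override k (v :: s)) `&` X) =
  (\sum_(0 <= j <oo)
     P (cevent (Q \o override (fupd k v j) s) `&` ([set w | Rv v w = j] `&` X)))%E.
Proof.
move=> mX; rewrite cevent_override_cons; apply/esym/cvg_lim => //.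
apply: measure_sigma_additive.
  by move=> j; apply: measurableI; [exact: measurable_cevent_override | exact: measurableI].
by move=> i j _ _ [w [[_ [/= <- _]] [_ [/= <- _]]]].
Qed.

(* Splitting on the radius at the head of [s] reduces the event to a countable
   disjoint union of events depending on a shorter list. *)
Lemma measure_override_cylinder s t Q k : uniq (s ++ t) ->
  P (cevent (Q \o override k s) `&` cylinder t k) =
  (P (cevent (Q \o override k s)) * (\prod_(v <- t) p (k v))%:E)%E.
Proof.
elim: s t k => [|v s IH] t k.
  rewrite cevent_override_nil /= => ut; case: asboolP => _.
    by rewrite setTI measure_cylinder // probability_setT mul1e.
  by rewrite set0I measure0 mul0e.
rewrite cat_cons /= mem_cat negb_or => /andP[/andP[vs vt] ust].
have us : uniq s by move: ust; rewrite cat_uniq => /and3P[].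
rewrite measure_cevent_override_cons; last exact: measurable_cylinder.
rewrite -[cevent (Q \o _)]setIT measure_cevent_override_cons //.
rewrite muleC -nneseriesZl; last by move=> j _; exact: measure_ge0.
apply: eq_eseriesr => j _.
rewrite setI_cylinder_fupd // IH; last by rewrite -cat1s uniq_catCA /= mem_cat negb_or vs vt ust.
rewrite -(cylinder_nil k) setI_cylinder_fupd // IH; last by rewrite cats1 rcons_uniq vs us.
rewrite !big_cons big_nil prod_fupd // /fupd eqxx mulr1.
by rewrite EFinM muleA muleC.
Qed.

Lemma cevent_override s Q k : depends_on s Q -> cevent Q = cevent (Q \o override k s).
Proof.
by move=> H; apply/seteqP; split=> w; apply: H => u us; rewrite /override us.
Qed.

Lemma measurable_cevent s Q : depends_on s Q -> measurable (cevent Q).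
Proof.
by move=> H; rewrite (cevent_override (fun _ => 0%N) H); exact: measurable_cevent_override.
Qed.

Lemma measure_cevent_cylinder s Q t k : depends_on s Q -> uniq s -> uniq t ->
  (forall u, u \in s -> u \notin t) ->
  P (cevent Q `&` cylinder t k) = (P (cevent Q) * (\prod_(v <- t) p (k v))%:E)%E.
Proof.
move=> DQ us ut st; rewrite (cevent_override k DQ) measure_override_cylinder //.
rewrite cat_uniq us ut andbT /=; apply/hasPn => u /= uT.
by apply/negP => /st; rewrite uT.
Qed.

Lemma measure_cevent_setI_override s1 Q1 s2 Q2 t k :
  depends_on s1 Q1 -> uniq s1 -> uniq (s2 ++ t) ->
  (forall u, u \in s1 -> u \notin s2 ++ t) ->
  P (cevent Q1 `&` cevent (Q2 \o override k s2) `&` cylinder t k) =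
  (P (cevent Q1) * P (cevent (Q2 \o override k s2)) * (\prod_(v <- t) p (k v))%:E)%E.
Proof.
move=> D1 u1; have mQ1 := measurable_cevent D1.
elim: s2 t k => [|v s2 IH] t k ust dis.
  rewrite cevent_override_nil; case: asboolP => _.
    by rewrite setIT probability_setT mule1; exact: measure_cevent_cylinder D1 u1 ust dis.
  by rewrite setI0 set0I measure0 mule0 mul0e.
move: ust; rewrite cat_cons /= mem_cat negb_or => /andP[/andP[vs vt] ust].
have [us2 ut] : uniq s2 /\ uniq t by move: ust; rewrite cat_uniq => /and3P[-> _ ->].
rewrite [cevent Q1 `&` _]setIC -setIA measure_cevent_override_cons; last first.
  exact/measurableI/measurable_cylinder.
rewrite -[cevent (Q2 \o _)]setIT measure_cevent_override_cons //.
rewrite (probE mQ1) muleAC -EFinM -nneseriesZl; last by move=> j _; exact: measure_ge0.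
apply: eq_eseriesr => j _.
have -> : cevent (Q2 \o override (fupd k v j) s2) `&`
    ([set w | Rv v w = j] `&` (cevent Q1 `&` cylinder t k)) =
    cevent Q1 `&` cevent (Q2 \o override (fupd k v j) s2) `&` cylinder (v :: t) (fupd k v j).
  by rewrite -setI_cylinder_fupd //; apply/seteqP; split=> w /=; tauto.
rewrite IH; first last.
- move=> u /dis; rewrite !mem_cat !inE !negb_or => /andP[/andP[uv us] ut'].
  by rewrite us uv ut'.
- by rewrite -cat1s uniq_catCA /= mem_cat negb_or vs vt ust.
rewrite -(cylinder_nil k) setI_cylinder_fupd // measure_override_cylinder; last first.
  by rewrite cats1 rcons_uniq vs us2.
rewrite !big_cons big_nil prod_fupd // /fupd eqxx (probE mQ1).
rewrite (probE (measurable_cevent_override _ _ _)) -!EFinM; congr (_%:E); ring.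
Qed.

Lemma measure_cevent_setI s1 Q1 s2 Q2 : depends_on s1 Q1 -> depends_on s2 Q2 ->
  (forall u, u \in s1 -> u \notin s2) ->
  P (cevent Q1 `&` cevent Q2) = (P (cevent Q1) * P (cevent Q2))%E.
Proof.
move=> D1 D2 dis; set k := fun _ : vtx d => 0%N.
have := @measure_cevent_setI_override (undup s1) Q1 (undup s2) Q2 [::] k
  (depends_on_undup D1) (undup_uniq _) (ltac:(by rewrite cats0 undup_uniq)).
rewrite cylinder_nil setIT big_nil mule1 -(cevent_override k (depends_on_undup D2)).
by apply=> u; rewrite cats0 !mem_undup; exact: dis.
Qed.

Lemma measure_cevent_all (I : seq nat) (Qs : nat -> (vtx d -> nat) -> Prop)
    (ss : nat -> seq (vtx d)) : uniq I ->
  (forall i, i \in I -> depends_on (ss i) (Qs i)) ->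
  (forall i j u, i \in I -> j \in I -> i != j -> u \in ss i -> u \notin ss j) ->
  P (cevent (fun r => forall i, i \in I -> Qs i r)) =
  (\prod_(i <- I) prob (cevent (Qs i)))%:E.
Proof.
elim: I => [|i I IH] /=.
  by move=> _ _ _; rewrite big_nil -(probability_setT P); congr (P _); apply/seteqP.
move=> /andP[iI uI] D dis.
have -> : cevent (fun r => forall j, j \in i :: I -> Qs j r) =
    cevent (Qs i) `&` cevent (fun r => forall j, j \in I -> Qs j r).
  apply/seteqP; split=> w /=.
    by move=> H; split=> [|j jI]; apply: H; rewrite inE ?eqxx ?jI ?orbT.
  by move=> [H1 H2] j; rewrite inE => /orP[/eqP->//|/H2].
have Di : depends_on (ss i) (Qs i) by apply: D; rewrite inE eqxx.
rewrite (measure_cevent_setI (s2 := flatten (map ss I)) Di); first last.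
- move=> u ui; apply/negP => /flatten_mapP [j jI uj].
  have ij : i != j by apply: contraNneq iI => ->.
  by move: uj; apply/negP; apply: (dis i j u); rewrite ?inE ?eqxx ?jI ?orbT.
- move=> r r' E H j jI; apply: (D j); first by rewrite inE jI orbT.
    by move=> u uj; apply: E; apply/flatten_mapP; exists j.
  exact: H.
rewrite IH //; last by move=> j j' u jI j'I; apply: dis; rewrite inE ?jI ?j'I orbT.
  by rewrite big_cons EFinM -probE //; exact: measurable_cevent Di.
by move=> j jI; apply: D; rewrite inE jI orbT.
Qed.

Definition extinct_by_event n w a := cevent (fun r => extinct_by n r w a).
Definition extinct_event w a := \bigcup_n extinct_by_event n w a.
Definition ext w a : R := prob (extinct_event w a).

Definition children_extinct_by n w b :=
  cevent (fun r => forall i, i \in iota 0 (nchildren w) -> extinct_by n r (child w i) b).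

(* The factor of the recursion for [w] reached with remaining depth [a] and
   [R_w = k], where [h c b] plays the role of f(c, b). *)
Definition children_prod (h : vtx d -> nat -> R) w a k : R :=
  if maxn a k == 0%N then 1
  else \prod_(i <- iota 0 (nchildren w)) h (child w i) (maxn a k).-1.

Lemma measurable_extinct_by_event n w a : measurable (extinct_by_event n w a).
Proof. exact: measurable_cevent (@extinct_by_depends_on _ n w a). Qed.

Lemma measurable_extinct_event w a : measurable (extinct_event w a).
Proof. by apply: bigcupT_measurable => n; exact: measurable_extinct_by_event. Qed.

Lemma ext_ge0 w a : 0 <= ext w a.
Proof. exact: prob_ge0. Qed.

Lemma ext_le1 w a : ext w a <= 1.
Proof. exact/prob_le1/measurable_extinct_event. Qed.

Lemma prob_extinct_by_event_le_ext n w a : prob (extinct_by_event n w a) <= ext w a.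
Proof.
apply: le_prob; [exact: measurable_extinct_by_event | exact: measurable_extinct_event |].
by move=> x Hx; exists n.
Qed.

Lemma cvg_measure_extinct_by_event w a :
  P (extinct_by_event n w a) @[n --> \oo] --> P (extinct_event w a).
Proof.
apply: (nondecreasing_cvg_mu (F := fun n => extinct_by_event n w a)).
- by move=> n; exact: measurable_extinct_by_event.
- exact: measurable_extinct_event.
- by move=> m n mn; apply/subsetPset => x; exact: extinct_by_le.
Qed.

Lemma cvg_prob_extinct_by_event w a :
  prob (extinct_by_event n w a) @[n --> \oo] --> ext w a.
Proof.
have := @cvg_measure_extinct_by_event w a.
by rewrite (probE (measurable_extinct_event w a)) => /fine_cvgP [_].
Qed.

Lemma children_prod_ge0 h w a k : (forall c b, 0 <= h c b) -> 0 <= children_prod h w a k.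
Proof. by move=> H; rewrite /children_prod; case: eqP => // _; exact: prodr_ge0. Qed.

Lemma children_prod_le h h' w a k : (forall c b, 0 <= h c b <= h' c b) ->
  children_prod h w a k <= children_prod h' w a k.
Proof. by move=> H; rewrite /children_prod; case: eqP => // _; exact: ler_prod. Qed.

Lemma cvg_children_prod (hn : nat -> vtx d -> nat -> R) h w a k :
  (forall c b, hn n c b @[n --> \oo] --> h c b) ->
  children_prod (hn n) w a k @[n --> \oo] --> children_prod h w a k.
Proof.
move=> H; rewrite /children_prod; case: eqP => _; first exact: cvg_cst.
exact: (@cvg_prod_seq _ _ _ (fun i n => hn n (child w i) (maxn a k).-1)).
Qed.

Lemma measure_children_extinct_by n w b :
  P (children_extinct_by n w b) =
  (\prod_(i <- iota 0 (nchildren w)) prob (extinct_by_event n (child w i) b))%:E.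
Proof.
apply: (measure_cevent_all (ss := fun i => support n (child w i))).
- exact: iota_uniq.
- by move=> i _; exact: extinct_by_depends_on.
move=> i j u; rewrite !mem_iota !add0n => /andP[_ Hi] /andP[_ Hj] ij ui.
apply: contra ij => uj; apply/eqP/(child_prefix_inj Hi Hj).
  exact: support_subtree ui.
exact: support_subtree uj.
Qed.

Lemma extinct_by_eventS n w a :
  extinct_by_event n.+1 w a = \bigcup_k ([set x | Rv w x = k] `&`
    if maxn a k == 0%N then setT else children_extinct_by n w (maxn a k).-1).
Proof.
apply/seteqP; split=> x.
  rewrite /extinct_by_event /cevent /= => H; exists (Rv w x) => //; split => //.
  case: eqP => // E; move: H => [//|H] i.
  by rewrite mem_iota add0n => /andP[_ /H].
move=> [k _ [/= <-]]; rewrite /extinct_by_event /cevent /=.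
case: eqP => [E _|E H]; first by left.
by right => i Hi; apply: H; rewrite mem_iota add0n Hi.
Qed.

Lemma measure_extinct_by_eventS n w a : P (extinct_by_event n.+1 w a) =
  (\sum_(0 <= k <oo)
     (p k * children_prod (fun c b => prob (extinct_by_event n c b)) w a k)%:E)%E.
Proof.
have Dch b : depends_on (flatten [seq support n (child w i) | i <- iota 0 (nchildren w)])
    (fun r => forall i, i \in iota 0 (nchildren w) -> extinct_by n r (child w i) b).
  move=> r r' E H i Hi; apply: (extinct_by_depends_on (r := r)) (H i Hi).
  by move=> u us; apply: E; apply/flatten_mapP; exists i.
rewrite extinct_by_eventS.
transitivity (\sum_(0 <= k <oo) P ([set x | Rv w x = k] `&`
    if maxn a k == 0%N then setT else children_extinct_by n w (maxn a k).-1))%E.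
  apply/esym/cvg_lim => //; apply: measure_sigma_additive.
    move=> k; apply: measurableI => //; case: eqP => // _.
    exact: measurable_cevent (Dch _).
  by move=> i j _ _ [x [[/= <- _] [/= <- _]]].
apply: eq_eseriesr => k _; rewrite /children_prod; case: eqP => _.
  by rewrite setIT P_Rv mulr1.
rewrite EFinM -measure_children_extinct_by -(P_Rv w).
rewrite (_ : [set x | Rv w x = k] = cevent (fun r => r w = k)) //.
rewrite (measure_cevent_setI (s1 := [:: w]) _ (Dch _)) //.
  by move=> r r' E <-; apply/esym/E; rewrite inE eqxx.
move=> u; rewrite inE => /eqP ->; apply/negP => /flatten_mapP [i].
rewrite mem_iota add0n => /andP[_ Hi] /support_subtree.
exact/negP/child_not_prefix.
Qed.

Lemma measure_extinct_event_le w a :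
  (P (extinct_event w a) <= \sum_(0 <= k <oo) (p k * children_prod ext w a k)%:E)%E.
Proof.
have prod_ge0 h k : (forall c b, 0 <= h c b) -> (0 <= (p k * children_prod h w a k)%:E)%E.
  by move=> h0; rewrite lee_fin mulr_ge0 ?p_ge0 ?children_prod_ge0.
rewrite -(cvg_lim _ (@cvg_measure_extinct_by_event w a)) //.
apply: lime_le; first by apply/cvg_ex; eexists; exact: cvg_measure_extinct_by_event.
apply: nearW => -[|n].
  rewrite (_ : extinct_by_event 0 w a = set0) ?measure0; last by apply/seteqP; split=> x.
  by apply: nneseries_ge0 => k _ _; apply: prod_ge0; exact: ext_ge0.
rewrite measure_extinct_by_eventS; apply: lee_nneseries => k _.
  by move=> _; apply: prod_ge0 => c b; exact: prob_ge0.
rewrite lee_fin ler_wpM2l ?p_ge0 // children_prod_le // => c b.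
by rewrite prob_ge0 prob_extinct_by_event_le_ext.
Qed.

Lemma measure_extinct_event_ge w a :
  (\sum_(0 <= k <oo) (p k * children_prod ext w a k)%:E <= P (extinct_event w a))%E.
Proof.
have prod_ge0 h k : (forall c b, 0 <= h c b) -> 0 <= p k * children_prod h w a k.
  by move=> h0; rewrite mulr_ge0 ?p_ge0 ?children_prod_ge0.
apply: lime_le.
  by apply: is_cvg_nneseries => k _ _; rewrite lee_fin prod_ge0 //; exact: ext_ge0.
apply: nearW => K; rewrite sumEFin (probE (measurable_extinct_event w a)) lee_fin.
have Hc : \sum_(0 <= k < K) p k * children_prod (fun c b => prob (extinct_by_event n c b)) w a k
    @[n --> \oo] --> \sum_(0 <= k < K) p k * children_prod ext w a k.
  apply: cvg_sum_seq => k; apply: cvgM; first exact: cvg_cst.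
  by apply: cvg_children_prod => c b; exact: cvg_prob_extinct_by_event.
rewrite -(cvg_lim _ Hc) //; apply: limr_le; first by apply/cvg_ex; eexists; exact: Hc.
apply: nearW => n /=; apply: le_trans (prob_extinct_by_event_le_ext n.+1 w a).
rewrite -lee_fin -probE ?measure_extinct_by_eventS //; last exact: measurable_extinct_by_event.
rewrite -sumEFin; apply: nneseries_lim_ge => k _ _.
by rewrite lee_fin prod_ge0 // => c b; exact: prob_ge0.
Qed.

Lemma ext_rec w a : (ext w a)%:E = (\sum_(0 <= k <oo) (p k * children_prod ext w a k)%:E)%E.
Proof.
rewrite -probE; last exact: measurable_extinct_event.
apply/eqP; rewrite eq_le.
by rewrite measure_extinct_event_le measure_extinct_event_ge.
Qed.

Lemma Eg_bounds f : (forall k, 0 <= f k <= 1) ->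
  [/\ (0 <= Eg p f)%E, (Eg p f <= 1)%E & Eg p f \is a fin_num].
Proof.
move=> f01; have Eg0 : (0 <= Eg p f)%E.
  by apply: nneseries_ge0 => k _ _; rewrite lee_fin mulr_ge0 ?p_ge0 //; case/andP: (f01 k).
have Eg1 : (Eg p f <= 1)%E.
  rewrite -nneseries_p_eq1; apply: lee_nneseries => k _.
    by move=> _; rewrite lee_fin mulr_ge0 ?p_ge0 //; case/andP: (f01 k).
  by rewrite lee_fin ler_piMr ?p_ge0 //; case/andP: (f01 k).
by split => //; rewrite ge0_fin_numE // (le_lt_trans Eg1 (ltey _)).
Qed.

Lemma survivalE : survival Rv = ~` extinct_event (origin d) 0.
Proof.
apply/seteqP; split=> x /= Hx.
  by move=> [n _ Hn]; apply: Hx; apply/(finite_clusterP _ d_gt0); exists n.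
by move=> /(finite_clusterP _ d_gt0) [n Hn]; apply: Hx; exists n.
Qed.

Lemma measure_survival : P (survival Rv) = (1 - (ext (origin d) 0)%:E)%E.
Proof.
rewrite survivalE probability_setC ?probE //; exact: measurable_extinct_event.
Qed.

Lemma Eg_pow_fixE (t : R) : 0 <= t ->
  (Eg p (fun k => (t ^+ (d ^ k))%R) + ((1 - t) * p 0%N)%:E =
   \sum_(0 <= k <oo) (p k * (if k == 0%N then 1 else t ^+ (d ^ k)))%:E)%E.
Proof.
move=> t0; have term_ge0 k : (0 <= (p k * t ^+ (d ^ k))%:E)%E.
  by rewrite lee_fin mulr_ge0 ?p_ge0 ?exprn_ge0.
rewrite /Eg !nneseries_recl //; first last.
  by move=> k _; rewrite lee_fin mulr_ge0 ?p_ge0 //; case: eqP => // _; exact: exprn_ge0.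
rewrite addeAC -EFinD expn0 expr1 mulr1; congr (_ + _)%E.
  by congr (_%:E); ring.
by rewrite eseries_cond [RHS]eseries_cond; apply: eq_eseriesr => -[].
Qed.

Section LowerBound.
Variable rho : R.
Hypothesis rho01 : 0 <= rho <= 1.
Hypothesis rho_fix :
  (\sum_(0 <= k <oo) (p k * (if k == 0%N then 1 else rho ^+ (d ^ k)))%:E)%E = rho%:E.

Lemma nneseries_rho_pow_maxn_le a :
  (\sum_(0 <= k <oo)
     (p k * (if maxn a k == 0%N then 1 else rho ^+ (d ^ maxn a k)))%:E
   <= (rho ^+ (d ^ a))%:E)%E.
Proof.
have /andP[rho0 rho1] := rho01.
have [->|a0] := eqVneq a 0%N.
  rewrite expn0 expr1 -rho_fix le_eqVlt; apply/orP; left; apply/eqP.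
  by apply: eq_eseriesr => k _; rewrite max0n.
apply: (@le_trans _ _ (\sum_(0 <= k <oo) (p k * rho ^+ (d ^ a))%:E)%E).
  apply: lee_nneseries => k _.
    by move=> _; rewrite lee_fin mulr_ge0 ?p_ge0 //; case: eqP => // _; exact: exprn_ge0.
  rewrite lee_fin ler_wpM2l ?p_ge0 //; case: eqP => [|_]; first by lia.
  by apply: ler_wiXn2l => //; rewrite leq_pexp2l ?leq_maxl.
under eq_eseriesr do rewrite EFinM muleC.
by rewrite nneseriesZl ?nneseries_p_eq1 ?mule1 // => k _; rewrite lee_fin p_ge0.
Qed.

Lemma prob_extinct_by_event_le_rho_pow n w a : nchildren w = d ->
  prob (extinct_by_event n w a) <= rho ^+ (d ^ a).
Proof.
have /andP[rho0 rho1] := rho01.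
elim: n w a => [|n IH] w a Hw.
  rewrite (_ : extinct_by_event 0 w a = set0); last by apply/seteqP; split=> x.
  by rewrite /prob measure0 /= exprn_ge0.
rewrite -lee_fin -probE ?measure_extinct_by_eventS; last exact: measurable_extinct_by_event.
apply: le_trans (nneseries_rho_pow_maxn_le a); apply: lee_nneseries => k _.
  by move=> _; rewrite lee_fin mulr_ge0 ?p_ge0 ?children_prod_ge0 // => c b; exact: prob_ge0.
rewrite lee_fin ler_wpM2l ?p_ge0 // /children_prod; case: eqP => // Hm.
rewrite Hw; apply: (@le_trans _ _ ((rho ^+ (d ^ (maxn a k).-1)) ^+ d)).
  by apply: prod_iota_le_const => i Hi; rewrite prob_ge0 IH // nchildren_child ?Hw.
by rewrite -exprM -expnSr prednK // lt0n; apply/eqP.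
Qed.

Lemma ext_le_rho_pow w a : nchildren w = d -> ext w a <= rho ^+ (d ^ a).
Proof.
move=> Hw; rewrite -(cvg_lim _ (@cvg_prob_extinct_by_event w a)) //.
apply: limr_le; first by apply/cvg_ex; eexists; exact: cvg_prob_extinct_by_event.
by apply: nearW => n; exact: prob_extinct_by_event_le_rho_pow.
Qed.

Lemma children_prod_origin_le k : (0 < k)%N ->
  children_prod ext (origin d) 0 k <= rho `^ (d.+1%:R / d%:R * (d ^ k)%:R).
Proof.
have /andP[rho0 rho1] := rho01.
move=> k0; rewrite /children_prod max0n gtn_eqF // (_ : nchildren (origin d) = d.+1) //.
apply: (@le_trans _ _ ((rho ^+ (d ^ k.-1)) ^+ d.+1)).
  apply: prod_iota_le_const => i Hi.
  by rewrite ext_ge0 ext_le_rho_pow // nchildren_child.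
rewrite -exprM -powR_mulrn // le_eqVlt; apply/orP; left; apply/eqP; congr (_ `^ _).
rewrite -{2}(prednK k0) expnSr !natrM -[d.+1]addn1 natrD.
by field; rewrite pnatr_eq0 -lt0n.
Qed.

Lemma ext_origin_le : ((ext (origin d) 0)%:E <=
  ((1 - rho `^ (d.+1%:R / d%:R)) * p 0%N)%R%:E +
  Eg p (fun k => (rho `^ (d.+1%:R / d%:R * (d ^ k)%:R))%R))%E.
Proof.
have term_ge0 k : (0 <= (p k * rho `^ (d.+1%:R / d%:R * (d ^ k)%:R))%:E)%E.
  by rewrite lee_fin mulr_ge0 ?p_ge0 ?powR_ge0.
rewrite ext_rec /Eg !nneseries_recl //; first last.
  by move=> k _; rewrite lee_fin mulr_ge0 ?p_ge0 ?children_prod_ge0 // => c b; exact: ext_ge0.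
rewrite addeA -EFinD; apply: leeD.
  rewrite lee_fin /children_prod max0n eqxx expn0 !mulr1 le_eqVlt; apply/orP; left.
  by apply/eqP; ring.
rewrite eseries_cond [leRHS]eseries_cond; apply: lee_nneseries => k.
  by move=> _ _; rewrite lee_fin mulr_ge0 ?p_ge0 ?children_prod_ge0 // => c b; exact: ext_ge0.
by move=> /= k1; rewrite lee_fin ler_wpM2l ?p_ge0 ?children_prod_origin_le.
Qed.

End LowerBound.

Lemma survival_lower_bound rho : 0 <= rho ->
  (Eg p (fun k => (rho ^+ (d ^ k))%R) + ((1 - rho) * p 0%N)%:E = rho%:E)%E ->
  (forall r, 0 <= r -> (Eg p (fun k => (r ^+ (d ^ k))%R) + ((1 - r) * p 0%N)%:E = r%:E)%E ->
     rho <= r) ->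
  ((1 - (1 - rho `^ (d.+1%:R / d%:R)) * p 0%N)%R%:E
     - Eg p (fun k => (rho `^ (d.+1%:R / d%:R * (d ^ k)%:R))%R) <= P (survival Rv))%E.
Proof.
move=> rho0 rho_fix rho_min.
have rho1 : rho <= 1.
  apply: rho_min => //; rewrite /Eg; under eq_eseriesr do rewrite expr1n mulr1.
  by rewrite nneseries_p_eq1 subrr mul0r adde0.
have rho01 : 0 <= rho <= 1 by rewrite rho0 rho1.
have c0 : 0 <= d.+1%:R / d%:R :> R by rewrite divr_ge0.
have [_ _ Egf] := @Eg_bounds (fun k => rho `^ (d.+1%:R / d%:R * (d ^ k)%:R))
  (fun k => ltac:(by rewrite powR_ge0 powR_le1 // mulr_ge0)).
have := ext_origin_le rho01 (etrans (esym (Eg_pow_fixE rho0)) rho_fix).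
rewrite measure_survival -(fineK Egf) -EFinD !lee_fin.
have := powR_le1 rho01 c0; lra.
Qed.

Fixpoint dary_size (a : nat) : nat := if a is a'.+1 then (1 + d * dary_size a')%N else 1%N.

Lemma dary_size_gt0 a : (0 < dary_size a)%N.
Proof. by case: a. Qed.

Lemma sum_expn_dary_size k : (\sum_(1 <= m < k.+2) d ^ m)%N = (d * dary_size k)%N.
Proof.
elim: k => [|k IH]; first by rewrite big_nat1 muln1.
rewrite big_nat_recl // expn1 /= mulnDr muln1 -IH big_distrr /=.
by congr (_ + _)%N; apply: eq_bigr => m _; rewrite expnS.
Qed.

Lemma natr_dary_size k : (d%:R - 1) * (dary_size k)%:R = (d ^ k.+1)%:R - 1 :> R.
Proof.
elim: k => [|k IH]; first by rewrite /= expn1 mulr1.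
by rewrite /= natrD natrM mulrDr mulr1 mulrCA IH (expnS d k.+1) natrM; ring.
Qed.

Definition psi_map (t : R) : R :=
  fine (Eg p (fun k => (t ^+ (\sum_(1 <= m < k.+1) d ^ m)%N)%R)).

Lemma psi_mapE t : 0 <= t <= 1 ->
  Eg p (fun k => (t ^+ (\sum_(1 <= m < k.+1) d ^ m)%N)%R) = (psi_map t)%:E.
Proof.
move=> /andP[t0 t1]; have [_ _ Egf] := @Eg_bounds (fun k => t ^+ (\sum_(1 <= m < k.+1) d ^ m))
  (fun k => ltac:(by rewrite exprn_ge0 // exprn_ile1)).
by rewrite fineK.
Qed.

Lemma psi_map01 t : 0 <= t <= 1 -> 0 <= psi_map t <= 1.
Proof.
move=> /[dup] /andP[t0 t1] t01.
have [Eg0 Eg1 _] := @Eg_bounds (fun k => t ^+ (\sum_(1 <= m < k.+1) d ^ m))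
  (fun k => ltac:(by rewrite exprn_ge0 // exprn_ile1)).
by move: Eg0 Eg1; rewrite psi_mapE // !lee_fin => -> ->.
Qed.

Lemma psi_map_le s t : 0 <= s -> s <= t -> t <= 1 -> psi_map s <= psi_map t.
Proof.
move=> s0 st t1; have t0 := le_trans s0 st.
rewrite -lee_fin -!psi_mapE ?s0 ?t0 ?t1 ?(le_trans st t1) //.
apply: lee_nneseries => k; first by move=> _ _; rewrite lee_fin mulr_ge0 ?p_ge0 ?exprn_ge0.
by rewrite lee_fin ler_wpM2l ?p_ge0 // lerXn2r // nnegrE.
Qed.

Definition psi_iter (n : nat) : R := iter n psi_map 0.

Lemma psi_iter01 n : 0 <= psi_iter n <= 1.
Proof. by elim: n => [|n IH] /=; [rewrite lexx ler01 | exact: psi_map01]. Qed.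

Lemma nondecreasing_psi_iter : nondecreasing_seq psi_iter.
Proof.
apply/nondecreasing_seqP => n; elim: n => [|n IH]; first by case/andP: (psi_iter01 1).
by apply: psi_map_le => //; [case/andP: (psi_iter01 n) | case/andP: (psi_iter01 n.+1)].
Qed.

Lemma cvgn_psi_iter : cvgn psi_iter.
Proof.
apply: nondecreasing_is_cvgn; first exact: nondecreasing_psi_iter.
by exists 1 => _ [n _ <-]; case/andP: (psi_iter01 n).
Qed.

Definition psi_lim : R := limn psi_iter.

Lemma psi_iter_le_lim n : psi_iter n <= psi_lim.
Proof. exact: (nondecreasing_cvgn_le nondecreasing_psi_iter cvgn_psi_iter). Qed.

Lemma psi_lim01 : 0 <= psi_lim <= 1.
Proof.
rewrite (le_trans _ (psi_iter_le_lim 0)) //=.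
by apply: limr_le; [exact: cvgn_psi_iter | apply: nearW => n; case/andP: (psi_iter01 n)].
Qed.

Lemma psi_lim_fix : Eg p (fun k => (psi_lim ^+ (\sum_(1 <= m < k.+1) d ^ m)%N)%R) = psi_lim%:E.
Proof.
have /andP[t0 t1] := psi_lim01.
rewrite psi_mapE ?t0 ?t1 //; congr (_%:E); apply/eqP; rewrite eq_le; apply/andP; split.
  rewrite -lee_fin -psi_mapE ?t0 ?t1 //; apply: lime_le.
    by apply: is_cvg_nneseries => k _ _; rewrite lee_fin mulr_ge0 ?p_ge0 ?exprn_ge0.
  apply: nearW => K; rewrite sumEFin lee_fin.
  have Hc : \sum_(0 <= k < K) p k * psi_iter n ^+ (\sum_(1 <= m < k.+1) d ^ m)%N
      @[n --> \oo] --> \sum_(0 <= k < K) p k * psi_lim ^+ (\sum_(1 <= m < k.+1) d ^ m)%N.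
    apply: cvg_sum_seq => k; apply: cvgM; first exact: cvg_cst.
    exact/cvg_expr/cvgn_psi_iter.
  rewrite -(cvg_lim _ Hc) //; apply: limr_le; first by apply/cvg_ex; eexists; exact: Hc.
  apply: nearW => n /=; apply: le_trans (psi_iter_le_lim n.+1).
  rewrite /= -lee_fin -psi_mapE ?psi_iter01 // -sumEFin; apply: nneseries_lim_ge => k _ _.
  by rewrite lee_fin mulr_ge0 ?p_ge0 ?exprn_ge0 //; case/andP: (psi_iter01 n).
apply: limr_le; first exact: cvgn_psi_iter.
apply: nearW => n; apply: le_trans (nondecreasing_psi_iter (leqnSn n)) _.
by apply: psi_map_le => //; [case/andP: (psi_iter01 n) | exact: psi_iter_le_lim].
Qed.

Lemma psi_map_le_ext t w : 0 <= t <= 1 -> nchildren w = d ->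
  (forall i a, (i < d)%N -> t ^+ dary_size a <= ext (child w i) a) ->
  psi_map t <= ext w 0.
Proof.
move=> /[dup] /andP[t0 t1] t01 Hw H.
rewrite -lee_fin -psi_mapE // ext_rec; apply: lee_nneseries => k.
  by move=> _ _; rewrite lee_fin mulr_ge0 ?p_ge0 ?exprn_ge0.
rewrite lee_fin ler_wpM2l ?p_ge0 // /children_prod max0n; case: k => [|k].
  by rewrite big_geq // expr0.
rewrite [_ == _]/= -pred_Sn Hw sum_expn_dary_size mulnC exprM.
by apply: prod_iota_ge_const => [|i /H //]; exact: exprn_ge0.
Qed.

(* Since all extinction probabilities are at most 1, the factor for a child
   at depth [maxn a k] dominates the product of the factors at depths [a] and
   [k]. *)
Lemma ext_succ_ge w a :
  ext w 0 * \prod_(i <- iota 0 (nchildren w)) ext (child w i) a <= ext w a.+1.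
Proof.
have ext01 c b : 0 <= ext c b <= 1 by rewrite ext_ge0 ext_le1.
have C0 : 0 <= \prod_(i <- iota 0 (nchildren w)) ext (child w i) a.
  by apply: prodr_ge0 => i _; exact: ext_ge0.
rewrite -lee_fin EFinM !ext_rec muleC -nneseriesZl; last first.
  by move=> k _; rewrite lee_fin mulr_ge0 ?p_ge0 ?children_prod_ge0 // => c b; exact: ext_ge0.
apply: lee_nneseries => k.
  by move=> _ _; rewrite -EFinM lee_fin !mulr_ge0 ?p_ge0 ?children_prod_ge0 // => c b; exact: ext_ge0.
rewrite -EFinM lee_fin mulrCA ler_wpM2l ?p_ge0 // /children_prod max0n.
rewrite (_ : (maxn a.+1 k == 0%N) = false); last by apply/negbTE; rewrite -lt0n; lia.
case: k => [|k] /=; first by rewrite mulr1.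
rewrite -big_split /=; apply: ler_prod => i _.
rewrite mulr_ge0 ?ext_ge0 //= (_ : (maxn a.+1 k.+1).-1 = maxn a k); last by lia.
case: (leqP a k) => ak; first by rewrite ler_piMl ?ext_ge0 ?ext_le1.
by rewrite ler_piMr ?ext_ge0 ?ext_le1.
Qed.

Lemma psi_iter_pow_le_ext n w a : nchildren w = d -> psi_iter n ^+ dary_size a <= ext w a.
Proof.
elim: n w a => [|n IH] w a Hw.
  by rewrite /= expr0n gtn_eqF ?dary_size_gt0 ?ext_ge0.
have /andP[t0 t1] := psi_iter01 n.+1.
have H0 w' : nchildren w' = d -> psi_iter n.+1 <= ext w' 0.
  move=> Hw'; apply: psi_map_le_ext => //; first exact: psi_iter01.
  by move=> i b Hi; apply: IH; rewrite nchildren_child ?Hw'.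
elim: a w Hw => [|a IHa] w Hw; first by rewrite /= expr1; exact: H0.
apply: le_trans (ext_succ_ge w a).
rewrite /= exprD expr1 mulnC exprM; apply: ler_pM; rewrite ?exprn_ge0 ?H0 //.
rewrite Hw; apply: prod_iota_ge_const => [|i Hi]; first exact: exprn_ge0.
by apply: IHa; rewrite nchildren_child ?Hw.
Qed.

Lemma psi_lim_pow_le_ext w a : nchildren w = d -> psi_lim ^+ dary_size a <= ext w a.
Proof.
move=> Hw; have Hc := @cvg_expr _ _ _ (dary_size a) cvgn_psi_iter.
rewrite -(cvg_lim _ Hc) //; apply: limr_le; first by apply/cvg_ex; eexists; exact: Hc.
by apply: nearW => n; exact: psi_iter_pow_le_ext.
Qed.

Lemma ext_origin_ge psi : (2 <= d)%N -> 0 <= psi <= psi_lim ->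
  (Eg p (fun k => (psi `^ (d.+1%:R / (d - 1)%:R * (d ^ k - 1)%:R))%R)
   <= (ext (origin d) 0)%:E)%E.
Proof.
move=> d2 /andP[psi0 psi_le]; have /andP[t0 t1] := psi_lim01.
rewrite ext_rec; apply: lee_nneseries => k; first by move=> _ _; rewrite lee_fin mulr_ge0 ?p_ge0 ?powR_ge0.
rewrite lee_fin ler_wpM2l ?p_ge0 // /children_prod max0n; case: k => [|k].
  by rewrite /= expn0 subnn mulr0 powRr0.
rewrite [_ == _]/= (_ : nchildren (origin d) = d.+1) // -pred_Sn.
apply: (@le_trans _ _ ((psi_lim ^+ dary_size k) ^+ d.+1)); last first.
  apply: prod_iota_ge_const => [|i Hi]; first exact: exprn_ge0.
  by apply: psi_lim_pow_le_ext; rewrite nchildren_child.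
apply: (@le_trans _ _ ((psi ^+ dary_size k) ^+ d.+1)); last first.
  by rewrite !lerXn2r ?nnegrE ?exprn_ge0.
rewrite -exprM -powR_mulrn // le_eqVlt; apply/orP; left; apply/eqP; congr (_ `^ _).
have d1 : (d - 1)%:R != 0 :> R by rewrite pnatr_eq0 subn_eq0 -ltnNge.
have -> : (d ^ k.+1 - 1)%:R = (d - 1)%:R * (dary_size k)%:R :> R.
  by rewrite !natrB ?expn_gt0 ?d_gt0 ?(ltnW d2) // !mulr1n natr_dary_size.
by rewrite natrM -[d.+1]addn1 natrD; field.
Qed.

Lemma survival_upper_bound psi : (2 <= d)%N -> 0 <= psi ->
  (forall r, 0 <= r -> Eg p (fun k => (r ^+ (\sum_(1 <= m < k.+1) d ^ m)%N)%R) = r%:E ->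
     psi <= r) ->
  (P (survival Rv) <=
   1 - Eg p (fun k => (psi `^ (d.+1%:R / (d - 1)%:R * (d ^ k - 1)%:R))%R))%E.
Proof.
move=> d2 psi0 psi_min.
have /andP[t0 t1] := psi_lim01.
have psi_le : psi <= psi_lim by apply: psi_min => //; exact: psi_lim_fix.
have psi01 : 0 <= psi <= 1 by rewrite psi0 (le_trans psi_le t1).
have c0 : 0 <= d.+1%:R / (d - 1)%:R :> R by rewrite divr_ge0.
have [_ _ Egf] := @Eg_bounds (fun k => psi `^ (d.+1%:R / (d - 1)%:R * (d ^ k - 1)%:R))
  (fun k => ltac:(by rewrite powR_ge0 powR_le1 // mulr_ge0)).
have psi_in : 0 <= psi <= psi_lim by rewrite psi0 psi_le.
have := ext_origin_ge d2 psi_in.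
by rewrite measure_survival -(fineK Egf) !lee_fin => ?; lra.
Qed.

End ConePercolation.

Theorem corollary2 (R : realType) (dsp : measure_display) (T : measurableType dsp)
  (P : probability T R) (d : nat) (p : nat -> R) (Rv : vtx d -> T -> nat)
  (rho psi : R) :
  (2 <= d)%N ->
  0 < p 0%N < 1 ->
  (forall v k, measurable [set w | Rv v w = k]) ->
  (forall v k, P [set w | Rv v w = k] = (p k)%:E) ->
  (forall (s : seq (vtx d)), uniq s -> forall k : vtx d -> nat,
     P (\bigcap_(v in [set` s]) [set w | Rv v w = k v]) = (\prod_(v <- s) p (k v))%:E) ->
  (* rho: smallest non-negative root of E(rho^(d^R)) + (1-rho) p_0 = rho *)
  0 <= rho ->
  (Eg p (fun k => (rho ^+ (d ^ k))%R) + ((1 - rho) * p 0%N)%:E = rho%:E)%E ->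
  (forall r, 0 <= r -> (Eg p (fun k => (r ^+ (d ^ k))%R) + ((1 - r) * p 0%N)%:E = r%:E)%E ->
     rho <= r) ->
  (* psi: smallest non-negative root of E(psi^(sum_{m=1}^R d^m)) = psi *)
  0 <= psi ->
  Eg p (fun k => (psi ^+ (\sum_(1 <= m < k.+1) d ^ m)%N)%R) = psi%:E ->
  (forall r, 0 <= r -> Eg p (fun k => (r ^+ (\sum_(1 <= m < k.+1) d ^ m)%N)%R) = r%:E ->
     psi <= r) ->
  ((1 - (1 - rho `^ (d.+1%:R / d%:R)) * p 0%N)%R%:E
     - Eg p (fun k => (rho `^ (d.+1%:R / d%:R * (d ^ k)%:R))%R) <= P (survival Rv))%E /\
  (P (survival Rv) <= 1 - Eg p (fun k => (psi `^ (d.+1%:R / (d - 1)%:R * (d ^ k - 1)%:R))%R))%E.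
Proof.
move=> d2 _ Rv_meas P_Rv P_Rv_bigcap rho0 rho_fix rho_min psi0 _ psi_min.
have d_gt0 : (0 < d)%N by apply: leq_trans d2.
split; first exact: survival_lower_bound.
exact: survival_upper_bound.
Qed.
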